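(* Let $G$ be a finite group with $|G| = mp^k$, where $p$ is a prime, $k \geq 1$, and $m$ is a natural number such that $1 < m/q < p < m$, where $q$ is the smallest prime divisor of $m$. If $P$ and $R$ are distinct Sylow $p$-subgroups of $G$, then $G = \langle P, R\rangle$ and $P \cap R = O_p(G)$ has order $p^{k-1}$.
   Context: $O_p(G)$ denotes the largest normal $p$-subgroup of $G$. *)

From mathcomp Require Import all_boot all_fingroup all_solvable.

From mathcomp Require Import all_boot all_fingroup all_solvable.
Set Implicit Arguments.
Unset Strict Implicit.
Unset Printing Implicit Defensive.

(* Write q for the least prime divisor of m. Every proper divisor of m is at
   most m/q < p, so p does not divide m, m < p^2, and the only divisors of m
   that are 1 mod p are 1 and m. Hence a subgroup H containing two distinct
   Sylow p-subgroups P and R has exactly m Sylow p-subgroups, forcing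
   |H : P| = m and H = G. Since |PR| <= |G|, the index |P : P ∩ R| is at most
   m < p^2, so it is exactly p; then P ∩ R is maximal, hence normal, in both P
   and R, hence normal in G = <P, R>, and a normal p-subgroup contained in a
   Sylow subgroup is O_p(G). *)

Lemma leq_div_pdiv m d : 0 < m -> d %| m -> d != m -> d <= m %/ pdiv m.
Proof.
move=> m_gt0 dv_d_m d_neq_m.
have [e def_m] := dvdnP dv_d_m.
have e_gt1 : 1 < e.
  case: e def_m => [|[|e]] def_m //; first by rewrite def_m in m_gt0.
  by rewrite def_m mul1n eqxx in d_neq_m.
have pdiv_le_e : pdiv m <= e by apply: pdiv_min_dvd; rewrite // def_m dvdn_mulr.
by rewrite leq_divRL ?pdiv_gt0 // [X in _ <= X]def_m mulnC leq_mul2r pdiv_le_e orbT.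
Qed.

Lemma dvdn_mod1_trivial p m d : 0 < m -> m %/ pdiv m < p ->
  d %| m -> d %% p = 1 -> d = 1 \/ d = m.
Proof.
move=> m_gt0 lt_mq_p dv_d_m d_mod_p; have [->|d_neq_m] := eqVneq d m; first by right.
left; rewrite -d_mod_p modn_small //.
exact: leq_ltn_trans (leq_div_pdiv m_gt0 dv_d_m d_neq_m) lt_mq_p.
Qed.

Lemma div_pdiv_lt_ndvdn p m : 0 < m -> m %/ pdiv m < p -> p < m -> ~~ (p %| m).
Proof.
move=> m_gt0 lt_mq_p lt_p_m; apply/negP => dv_p_m.
by have := leq_div_pdiv m_gt0 dv_p_m (negbT (ltn_eqF lt_p_m)); rewrite leqNgt lt_mq_p.
Qed.

Lemma div_pdiv_lt_sq p m : 1 < m %/ pdiv m -> m %/ pdiv m < p -> m < p ^ 2.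
Proof.
move=> mq_gt1 lt_mq_p; have m_gt0 : 0 < m by rewrite lt0n; apply: contraTneq mq_gt1 => ->.
have q_le_mq : pdiv m <= m %/ pdiv m by apply: pdiv_min_dvd; rewrite ?dvdn_div ?pdiv_dvd.
rewrite -(divnK (pdiv_dvd m)) -mulnn.
exact: leq_ltn_trans (leq_mul (leqnn _) q_le_mq) (ltn_mul lt_mq_p lt_mq_p).
Qed.

Open Scope group_scope.

Section SylowPairs.

Variables (gT : finGroupType) (p : nat) (G P R : {group gT}).

Lemma leq_index_meet : P \subset G -> R \subset G -> #|P : P :&: R| <= #|G : R|.
Proof.
move=> sPG sRG; have : #|P| * #|R| <= #|G| * #|P :&: R|.
  by rewrite mul_cardG leq_mul2r subset_leq_card ?orbT ?mulG_subG ?sPG.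
rewrite -(Lagrange (subsetIl P R)) -(Lagrange sRG) mulnAC [X in _ <= X]mulnC mulnA.
by rewrite leq_pmul2l ?muln_gt0 ?cardG_gt0.
Qed.

Hypotheses (pr_p : prime p) (sylP : p.-Sylow(G) P) (sylR : p.-Sylow(G) R).
Hypothesis neqPR : P != R.

Lemma Sylow_join_eq : #|G : P| %/ pdiv #|G : P| < p -> P <*> R = G.
Proof.
move=> small_index; set H := P <*> R.
have sPH : P \subset H := joing_subl P R.
have sHG : H \subset G by rewrite join_subG (pHall_sub sylP) (pHall_sub sylR).
have sylP_H := pHall_subl sPH sHG sylP.
have sylR_H := pHall_subl (joing_subr P R) sHG sylR.
have dv_nH_iH : #|'Syl_p(H)| %| #|H : P|.
  by rewrite (card_Syl sylP_H) indexgS // subsetI sPH normG.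
have nH_gt1 : 1 < #|'Syl_p(H)|.
  by apply/card_gt1P; exists P, R; rewrite !inE sylP_H sylR_H.
have [nH1|nH_eq] := dvdn_mod1_trivial (indexg_gt0 G P) small_index
  (dvdn_trans dv_nH_iH (indexSg sPH sHG)) (card_Syl_mod H pr_p).
  by rewrite nH1 in nH_gt1.
have iH_eq : #|H : P| = #|G : P|.
  apply/eqP; rewrite eqn_leq dvdn_leq ?indexSg //=.
  by rewrite -nH_eq dvdn_leq ?indexg_gt0.
by apply/eqP; rewrite eqEcard sHG -(Lagrange sPH) iH_eq (Lagrange (pHall_sub sylP)) leqnn.
Qed.

Lemma Sylow_meet_index : #|G : R| < (p ^ 2)%N -> #|P : P :&: R| = p.
Proof.
move=> small_index.
have [j _ def_index] : exists2 j, j <= logn p #|P| & #|P : P :&: R| = (p ^ j)%N.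
  apply/dvdn_pfactor; rewrite // -p_part part_pnat_id ?dvdn_indexg //.
  exact: pHall_pgroup sylP.
have lt_j_2 : j < 2.
  rewrite -(ltn_exp2l _ _ (prime_gt1 pr_p)) -def_index.
  exact: leq_ltn_trans (leq_index_meet (pHall_sub sylP) (pHall_sub sylR)) small_index.
case: j lt_j_2 def_index => [|[|//]] _; last by rewrite expn1.
move/(index1g (subsetIl P R))/setIidPl => sPR; case/negP: neqPR.
by rewrite -val_eqE eqEcard sPR (card_Hall sylP) (card_Hall sylR) /=.
Qed.

End SylowPairs.

Lemma meet_normal_join p (gT : finGroupType) (P R : {group gT}) : prime p ->
    p.-group P -> p.-group R -> #|P : P :&: R| = p -> #|R : P :&: R| = p ->
  P :&: R <| P <*> R.
Proof.
move=> pr_p pP pR iP iR.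
have nPR_P : P \subset 'N(P :&: R).
  by apply/normal_norm/(p_maximal_normal pP)/p_index_maximal; rewrite ?subsetIl ?iP.
have nPR_R : R \subset 'N(P :&: R).
  by apply/normal_norm/(p_maximal_normal pR)/p_index_maximal; rewrite ?subsetIr ?iR.
by rewrite /normal join_subG nPR_P nPR_R (subset_trans (subsetIl P R)) ?joing_subl.
Qed.

Lemma Sylow_meet_pcore p (gT : finGroupType) (G P R : {group gT}) :
    p.-Sylow(G) P -> p.-Sylow(G) R -> P :&: R <| G -> P :&: R = 'O_p(G).
Proof.
move=> sylP sylR nPR_G; apply/eqP; rewrite eqEsubset subsetI !pcore_sub_Hall //.
by rewrite pcore_max // (pgroupS (subsetIl P R) (pHall_pgroup sylP)).
Qed.

Theorem lemma3 (gT : finGroupType) (G P R : {group gT}) (p k m : nat) :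
  prime p -> 1 <= k ->
  #|G| = (m * p ^ k)%N ->
  1 < m %/ pdiv m -> m %/ pdiv m < p -> p < m ->
  P \in 'Syl_p(G) -> R \in 'Syl_p(G) -> P != R ->
  (P <*> R)%g = G /\ P :&: R = 'O_p(G) /\ #|P :&: R| = (p ^ k.-1)%N.
Proof.
move=> pr_p k_gt0 cardG mq_gt1 lt_mq_p lt_p_m; rewrite !inE => sylP sylR neqPR.
have m_gt0 : 0 < m by rewrite lt0n; apply: contraTneq mq_gt1 => ->.
have card_Syl_pk (X : {group gT}) : p.-Sylow(G) X -> #|X| = (p ^ k)%N.
  move/card_Hall->; rewrite p_part cardG lognM ?expn_gt0 ?(prime_gt0 pr_p) //.
  by rewrite pfactorK // logn_coprime ?prime_coprime ?div_pdiv_lt_ndvdn.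
have index_Syl (X : {group gT}) : p.-Sylow(G) X -> #|G : X| = m.
  move=> sylX; rewrite -divgS ?(pHall_sub sylX) // cardG card_Syl_pk //.
  by rewrite mulnK ?expn_gt0 ?(prime_gt0 pr_p).
have iPR : #|P : P :&: R| = p.
  by rewrite (Sylow_meet_index pr_p sylP sylR neqPR) ?index_Syl ?div_pdiv_lt_sq.
have iRP : #|R : P :&: R| = p.
  by rewrite setIC (Sylow_meet_index pr_p sylR sylP) 1?eq_sym ?index_Syl ?div_pdiv_lt_sq.
have joinPR : P <*> R = G.
  by rewrite (Sylow_join_eq pr_p sylP sylR neqPR) ?index_Syl.
have nPR_G : P :&: R <| G.
  by rewrite -joinPR (meet_normal_join pr_p) ?(pHall_pgroup sylP) ?(pHall_pgroup sylR).
split=> //; split; first exact: Sylow_meet_pcore nPR_G.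
have := Lagrange (subsetIl P R); rewrite iPR (card_Syl_pk P sylP) -(prednK k_gt0) expnSr.
by move/eqP; rewrite eqn_pmul2r ?(prime_gt0 pr_p) // => /eqP.
Qed.
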